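(* Let $\gamma\in\mathbb{R}\setminus\{0,1,2,-2\}$ and $\epsilon\in\mathbb{R}$, and put $\kappa=\frac{\gamma+2}{\gamma-2}$. Let $\mathfrak g$ be the complex Lie algebra with basis $X_1,X_2,X_3,X_4,Y,Z$ and brackets \[ [X_2,X_1]=X_2+\epsilon Z,\quad [X_2,X_4]=[X_2,X_3]=[X_1,X_4]=0,\quad [X_1,X_3]=-X_3,\quad [X_3,X_4]=X_3, \] \[ [X_1,Z]=-\epsilon\,\tfrac{\gamma-2}{\gamma+2}\,Y,\quad [X_1,Y]=Y,\quad [X_2,Y]=Z,\quad [X_2,Z]=\tfrac{\gamma-2}{\gamma+2}X_2,\quad [Z,Y]=\tfrac{\gamma-2}{\gamma+2}Y, \] \[ [X_3,Y]=[X_3,Z]=[X_4,Y]=[X_4,Z]=0 . \] In the universal enveloping algebra $U(\mathfrak g)$ define $T=\sqrt{2\kappa}\,(Y+X_2)$, $S=\sqrt{2\kappa}\,(Y-X_2)$, $Z'=2\kappa Z$ and \[ C=T^2-S^2-Z'^2 . \] Then $C=4\kappa\left[2X_2Y-Z\left(\kappa Z+1\right)\right]$, and $C$ commutes (in $U(\mathfrak g)$) with each of $Y,Z,X_1,X_2,X_3,X_4$.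
   Context: The elements $T,S,Z'$ span a subalgebra isomorphic to $sl(2)$ with $[Z',T]=2S$, $[T,S]=2Z'$, $[S,Z']=-2T$, and $C$ is its Casimir element. The exclusion $\gamma\neq\pm2$ is needed only for the coefficients to be defined. In the paper this algebra arises from approximate symmetry generators of the equation $u_{tt}+\epsilon u_t=[(1+u/\gamma)^{\gamma-1}]_{xx}$, realized e.g. by $X_2=\partial_t$, $X_3=\partial_x$, $X_4=x\partial_x+\frac{2\gamma}{\gamma-2}(1+\frac u\gamma)\partial_u$, $Z=\frac{\gamma-2}{\gamma+2}t\partial_t-\frac{2\gamma}{\gamma+2}(1+\frac u\gamma)\partial_u$, $Y=\frac{\gamma-2}{\gamma+2}\frac{t^2}{2}\partial_t-\frac{2\gamma t}{\gamma+2}(1+\frac u\gamma)\partial_u$, $X_1=t\partial_t+x\partial_x+\epsilon Y$. *)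

From HB Require Import structures.
From mathcomp Require Import all_boot all_order all_algebra.
From mathcomp Require Import reals.
From mathcomp Require Import complex.
Set Implicit Arguments. Unset Strict Implicit. Unset Printing Implicit Defensive.
Import Order.TTheory GRing.Theory Num.Theory.
Local Open Scope ring_scope.

Definition commr (A : pzRingType) (a b : A) : A := a * b - b * a.

(* With kappa = (gamma + 2) / (gamma - 2), the elements E = X2, F = kappa Y and
   H = kappa Z satisfy [E,F] = H, [H,F] = F and [E,H] = E, so they span a copy of
   sl(2), and C is four times its Casimir element 2EF - H^2 - H.  The Casimir
   element commutes with E, F, H by a direct computation, hence with Y, Z, X2, and
   with everything that centralizes E, F, H, such as X3 and X4.  On span(X2,Y,Z),
   ad X1 is the inner derivation ad(eps Y + kappa Z), so X1 - eps Y - kappa Z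
   centralizes E, F, H as well. *)

From HB Require Import structures.
From mathcomp Require Import all_boot all_order all_algebra.
From mathcomp Require Import reals.
From mathcomp Require Import complex.
Import Order.TTheory GRing.Theory Num.Theory.
Set Implicit Arguments. Unset Strict Implicit.
Local Open Scope ring_scope.

Section Commutator.
Variable A : pzRingType.
Implicit Types a b u : A.

Lemma commrP a b : reflect (GRing.comm a b) (commr a b == 0).
Proof. by rewrite subr_eq0; apply: eqP. Qed.

Lemma commrC a b : commr a b = - commr b a.
Proof. by rewrite /commr opprB. Qed.

Lemma commrr a : commr a a = 0.
Proof. exact: subrr. Qed.

Lemma commrDl a b u : commr (a + b) u = commr a u + commr b u.
Proof. by rewrite /commr mulrDl mulrDr opprD addrACA. Qed.

Lemma commrNl a u : commr (- a) u = - commr a u.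
Proof. by rewrite /commr mulNr mulrN opprB opprK addrC. Qed.

Lemma commrBl a b u : commr (a - b) u = commr a u - commr b u.
Proof. by rewrite commrDl commrNl. Qed.

Lemma commrMnl a u n : commr (a *+ n) u = commr a u *+ n.
Proof. by rewrite /commr mulrnAl mulrnAr mulrnBl. Qed.

Lemma commrMl a b u : commr (a * b) u = a * commr b u + commr a u * b.
Proof. by rewrite /commr mulrBr mulrBl !mulrA addrA subrK. Qed.

Lemma mulr_commr a b : b * a = a * b - commr a b.
Proof. by rewrite /commr opprB addrC subrK. Qed.

Lemma sqrrD_noncomm a b : (a + b) ^+ 2 = a ^+ 2 + (a * b + b * a) + b ^+ 2.
Proof. by rewrite !expr2 mulrDl !mulrDr addrA addrA. Qed.

Lemma sqrrD_sub_sqrrB a b : (a + b) ^+ 2 - (a - b) ^+ 2 = (a * b + b * a) *+ 2.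
Proof.
rewrite !sqrrD_noncomm sqrrN mulrN mulNr -opprD; set s := a * b + b * a.
by rewrite [_ - s + _]addrAC [_ + s + _]addrAC opprB addrC addrACA subrr addr0 mulr2n.
Qed.

End Commutator.

Section ScaledCommutator.
Variables (K : pzRingType) (A : algType K).
Implicit Types (k : K) (a b : A).

Lemma commrZl k a b : commr (k *: a) b = k *: commr a b.
Proof. by rewrite /commr scalerBr -scalerAl -scalerAr. Qed.

Lemma commrZr k a b : commr a (k *: b) = k *: commr a b.
Proof. by rewrite /commr scalerBr -scalerAl -scalerAr. Qed.

Lemma commrZ k a b : GRing.comm a b -> GRing.comm a (k *: b).
Proof. by move=> ab; rewrite /GRing.comm -scalerAl -scalerAr ab. Qed.

End ScaledCommutator.

Section Casimir.
Variables (A : pzRingType) (e f h : A).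

Definition casimir := (e * f) *+ 2 - h * h - h.

Lemma comm_casimir u :
  GRing.comm u e -> GRing.comm u f -> GRing.comm u h -> GRing.comm u casimir.
Proof.
move=> ue uf uh; apply/commrB/uh/commrB; last exact/commrM.
exact/commrMn/commrM.
Qed.

Hypotheses (ef : commr e f = h) (hf : commr h f = f) (eh : commr e h = e).

Let fe : commr f e = - h. Proof. by rewrite commrC ef. Qed.
Let fh : commr f h = - f. Proof. by rewrite commrC hf. Qed.
Let he : commr h e = - e. Proof. by rewrite commrC eh. Qed.

Lemma commr_casimir_f : commr casimir f = 0.
Proof.
rewrite !(commrBl, commrMnl, commrMl) commrr ef hf mulr0 add0r.
by rewrite [f * h]mulr_commr hf addrA -mulr2n subKr subrr.
Qed.

Lemma commr_casimir_e : commr casimir e = 0.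
Proof.
rewrite !(commrBl, commrMnl, commrMl) commrr fe he mul0r addr0.
rewrite !(mulrN, mulNr) [h * e]mulr_commr eh -opprD opprK mulNrn.
by rewrite opprK [_ - e + _]addrAC -mulr2n addKr addNr.
Qed.

Lemma commr_casimir_h : commr casimir h = 0.
Proof.
rewrite !(commrBl, commrMnl, commrMl) commrr fh eh.
by rewrite mulrN addNr mul0rn mulr0 mul0r !(addr0, oppr0).
Qed.
End Casimir.

Section SymmetryAlgebra.
Variables (K : fieldType) (A : algType K) (c eps : K) (x1 x2 y z : A).
Hypothesis c_neq0 : c != 0.
Hypotheses (b21 : commr x2 x1 = x2 + eps *: z) (b1z : commr x1 z = (- eps * c) *: y)
  (b1y : commr x1 y = y) (b2y : commr x2 y = z) (b2z : commr x2 z = c *: x2)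
  (bzy : commr z y = c *: y).

Let kappa := c^-1.
Let cas := casimir x2 (kappa *: y) (kappa *: z).

Lemma casimir_x2yz :
  (4 * kappa) *: (2 *: (x2 * y) - z * (kappa *: z + 1)) = cas *+ 4.
Proof.
rewrite /cas /casimir -scalerA scaler_nat; congr (_ *+ 4).
rewrite -scalerAr -scalerAl scalerMnr -!scalerBr.
by rewrite mulrDr mulr1 scaler_nat opprD addrA.
Qed.

Lemma TSZ_formula (s : K) : s ^+ 2 = 2 * kappa ->
  (s *: (y + x2)) ^+ 2 - (s *: (y - x2)) ^+ 2 - ((2 * kappa) *: z) ^+ 2 =
  (4 * kappa) *: (2 *: (x2 * y) - z * (kappa *: z + 1)).
Proof.
move=> s2; rewrite !exprZn s2 -scalerBr sqrrD_sub_sqrrB [y * x2]mulr_commr b2y.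
rewrite expr2 -scalerA -scalerBr (_ : 4 * kappa = 2 * kappa * 2); last by rewrite mulrAC -natrM.
rewrite -[in RHS]scalerA scaler_nat; congr (_ *: _).
rewrite -scalerA scaler_nat -mulrnBl; congr (_ *+ 2).
rewrite mulrDr mulr1 -scalerAr expr2 scaler_nat mulr2n.
by rewrite [_ - z + _]addrAC opprD addrA [in RHS]addrAC.
Qed.

Let ef : commr x2 (kappa *: y) = kappa *: z.
Proof. by rewrite commrZr b2y. Qed.

Let hf : commr (kappa *: z) (kappa *: y) = kappa *: y.
Proof. by rewrite commrZl commrZr bzy [kappa *: (c *: y)]scalerA mulVf ?scale1r. Qed.

Let eh : commr x2 (kappa *: z) = x2.
Proof. by rewrite commrZr b2z scalerA mulVf ?scale1r. Qed.

Lemma comm_casimir_x2yz u :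
  GRing.comm u x2 -> GRing.comm u y -> GRing.comm u z -> GRing.comm u cas.
Proof. by move=> u2 uy uz; apply: comm_casimir => //; apply: commrZ. Qed.

Lemma comm_x2_casimir : GRing.comm x2 cas.
Proof. by apply/commr_sym/commrP/eqP; rewrite commr_casimir_e. Qed.

Let unscale (a : A) : a = c *: (kappa *: a).
Proof. by rewrite scalerA divff ?scale1r. Qed.

Lemma comm_y_casimir : GRing.comm y cas.
Proof.
by rewrite [y]unscale; apply/commr_sym/commrZ/commrP/eqP; rewrite commr_casimir_f.
Qed.

Lemma comm_z_casimir : GRing.comm z cas.
Proof.
by rewrite [z]unscale; apply/commr_sym/commrZ/commrP/eqP; rewrite commr_casimir_h.
Qed.

Let inner := eps *: y + kappa *: z.

Lemma x1_sub_inner_comm_x2 : GRing.comm (x1 - inner) x2.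
Proof.
apply/commrP; rewrite commrBl commrDl !commrZl commrC b21 (commrC y) b2y (commrC z) b2z.
by rewrite subr_eq0 !scalerN scalerA mulVf // scale1r opprD addrC.
Qed.

Lemma x1_sub_inner_comm_y : GRing.comm (x1 - inner) y.
Proof.
apply/commrP; rewrite commrBl commrDl !commrZl b1y commrr bzy.
by rewrite scalerA mulVf // scale1r scaler0 add0r subrr.
Qed.

Lemma x1_sub_inner_comm_z : GRing.comm (x1 - inner) z.
Proof.
apply/commrP; rewrite commrBl commrDl !commrZl b1z commrr (commrC y) bzy.
by rewrite scaler0 addr0 scalerN scalerA mulNr scaleNr subrr.
Qed.

Lemma comm_x1_casimir : GRing.comm x1 cas.
Proof.
rewrite -(subrK inner x1); apply/commr_sym/commrD.
  apply/commr_sym/comm_casimir_x2yz.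
  - exact: x1_sub_inner_comm_x2.
  - exact: x1_sub_inner_comm_y.
  - exact: x1_sub_inner_comm_z.
by apply/commrD; apply/commrZ/commr_sym; [exact: comm_y_casimir | exact: comm_z_casimir].
Qed.

End SymmetryAlgebra.

Local Open Scope complex_scope.

Theorem proposition1 (R : realType) (A : algType R[i]) (gamma eps : R)
  (hg0 : gamma != 0) (hg1 : gamma != 1) (hg2 : gamma != 2) (hgm2 : gamma != -2)
  (x1 x2 x3 x4 y z : A)
  (b21 : commr x2 x1 = x2 + (eps%:C) *: z)
  (b24 : commr x2 x4 = 0) (b23 : commr x2 x3 = 0) (b14 : commr x1 x4 = 0)
  (b13 : commr x1 x3 = - x3) (b34 : commr x3 x4 = x3)
  (b1z : commr x1 z = (- eps * ((gamma - 2) / (gamma + 2)))%:C *: y)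
  (b1y : commr x1 y = y) (b2y : commr x2 y = z)
  (b2z : commr x2 z = (((gamma - 2) / (gamma + 2))%:C) *: x2)
  (bzy : commr z y = (((gamma - 2) / (gamma + 2))%:C) *: y)
  (b3y : commr x3 y = 0) (b3z : commr x3 z = 0)
  (b4y : commr x4 y = 0) (b4z : commr x4 z = 0) :
  let kappa : R[i] := ((gamma + 2) / (gamma - 2))%:C in
  let T : A := sqrtC (2 * kappa) *: (y + x2) in
  let S : A := sqrtC (2 * kappa) *: (y - x2) in
  let Z' : A := (2 * kappa) *: z in
  let C : A := T ^+ 2 - S ^+ 2 - Z' ^+ 2 in
  C = (4 * kappa) *: (2 *: (x2 * y) - z * (kappa *: z + 1)) /\
  (commr C y = 0 /\ commr C z = 0 /\ commr C x1 = 0 /\ commr C x2 = 0 /\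
   commr C x3 = 0 /\ commr C x4 = 0).
Proof.
set c := ((gamma - 2) / (gamma + 2))%:C in b2z bzy.
have c_neq0 : c != 0.
  by rewrite fmorph_eq0 mulf_neq0 ?invr_eq0 ?subr_eq0 ?addr_eq0.
have -> : ((gamma + 2) / (gamma - 2))%:C = c^-1 by rewrite -fmorphV invf_div.
rewrite rmorphM rmorphN /= -/c in b1z.
move=> kappa T S Z' C.
have C_formula : C = (4 * kappa) *: (2 *: (x2 * y) - z * (kappa *: z + 1)).
  exact/TSZ_formula/sqrtCK.
have comm_C u : GRing.comm u (casimir x2 (kappa *: y) (kappa *: z)) -> commr C u = 0.
  move=> u_cas; apply/eqP/commrP/commr_sym.
  by rewrite C_formula casimir_x2yz //; apply/commrMn.
have comm_of_commr0 (a b : A) : commr a b = 0 -> GRing.comm a b by move/eqP/commrP.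
split=> //; do !split; apply: comm_C.
- exact: comm_y_casimir.
- exact: comm_z_casimir.
- exact: (comm_x1_casimir c_neq0 b21 b1z b1y b2y b2z bzy).
- exact: comm_x2_casimir.
- by apply: comm_casimir_x2yz; [apply/commr_sym | ..]; exact/comm_of_commr0.
- by apply: comm_casimir_x2yz; [apply/commr_sym | ..]; exact/comm_of_commr0.
Qed.
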